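(* Let $R$ be a commutative noetherian ring and let $\mathcal S$ be a subcategory of $R$-modules which is closed under submodules, extensions and direct unions. Then $\mathcal S$ satisfies the condition $C_{\mathfrak a}$ for every ideal $\mathfrak a$ of $R$.
   Context: A subcategory $\mathcal S$ satisfies the condition $C_{\mathfrak a}$ if for every $R$-module $M$: whenever $\Gamma_{\mathfrak a}(M)=M$ and $(0:_M\mathfrak a)\in\mathcal S$, then $M\in\mathcal S$. Closed under direct unions means: if a module is the union of a directed family of submodules each in $\mathcal S$, it lies in $\mathcal S$. *)

From HB Require Import structures.
From mathcomp Require Import all_boot all_order all_algebra.
Set Implicit Arguments. Unset Strict Implicit. Unset Printing Implicit Defensive.
Import GRing.Theory.
Local Open Scope ring_scope.

Definition is_ideal (R : comPzRingType) (I : R -> Prop) : Prop :=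
  [/\ I 0, (forall x y, I x -> I y -> I (x + y)) & (forall r x, I x -> I (r * x))].

Definition noetherian (R : comPzRingType) : Prop :=
  forall I : nat -> R -> Prop, (forall n, is_ideal (I n)) ->
    (forall n x, I n x -> I n.+1 x) ->
    exists n, forall m x, (n <= m)%N -> I m x -> I n x.

Definition is_submod (R : comPzRingType) (M : lmodType R) (N : M -> Prop) : Prop :=
  [/\ N 0, (forall x y, N x -> N y -> N (x + y)) & (forall r x, N x -> N (r *: x))].

(* A "subcategory" S of R-modules: a module is represented as a submodule N of
   some ambient module M; S M N means "the module N belongs to S". *)
Definition modclass (R : comPzRingType) := forall M : lmodType R, (M -> Prop) -> Prop.

Definition img (R : comPzRingType) (M M' : lmodType R) (f : M -> M') (N : M -> Prop) : M' -> Prop :=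
  fun y => exists2 x, N x & f x = y.

Definition closed_iso (R : comPzRingType) (S : modclass R) : Prop :=
  forall (M M' : lmodType R) (f : {linear M -> M'}) (N : M -> Prop),
    is_submod N -> (forall x y, N x -> N y -> f x = f y -> x = y) ->
    (S M N <-> S M' (img f N)).

Definition closed_sub (R : comPzRingType) (S : modclass R) : Prop :=
  forall (M : lmodType R) (N N' : M -> Prop), is_submod N -> is_submod N' ->
    (forall x, N' x -> N x) -> S M N -> S M N'.

(* closed under extensions: for a short exact sequence
   0 -> N ∩ ker f -> N -> f(N) -> 0, if both ends lie in S then so does N. *)
Definition closed_ext (R : comPzRingType) (S : modclass R) : Prop :=
  forall (M M' : lmodType R) (f : {linear M -> M'}) (N : M -> Prop),
    is_submod N -> S M (fun x => N x /\ f x = 0) -> S M' (img f N) -> S M N.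

Definition closed_dunion (R : comPzRingType) (S : modclass R) : Prop :=
  forall (M : lmodType R) (N : M -> Prop) (I : Type) (F : I -> M -> Prop),
    is_submod N -> inhabited I -> (forall i, is_submod (F i)) ->
    (forall i j, exists k, (forall x, F i x -> F k x) /\ (forall x, F j x -> F k x)) ->
    (forall i, S M (F i)) ->
    (forall x, N x <-> exists i, F i x) ->
    S M N.

(* x is killed by the ideal a^n: every product of n elements of a kills x *)
Definition killed_by_pow (R : comPzRingType) (M : lmodType R) (a : R -> Prop) (n : nat) (x : M) : Prop :=
  forall s : 'I_n -> R, (forall i, a (s i)) -> (\prod_(i < n) s i) *: x = 0.

Definition a_torsion (R : comPzRingType) (M : lmodType R) (a : R -> Prop) (N : M -> Prop) : Prop :=
  forall x, N x -> exists n, killed_by_pow a n x.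

Definition annsub (R : comPzRingType) (M : lmodType R) (a : R -> Prop) (N : M -> Prop) : M -> Prop :=
  fun x => N x /\ forall r, a r -> r *: x = 0.

Definition condC (R : comPzRingType) (S : modclass R) (a : R -> Prop) : Prop :=
  forall (M : lmodType R) (N : M -> Prop), is_submod N ->
    a_torsion a N -> S M (annsub a N) -> S M N.

From mathcomp Require Import all_boot all_order all_algebra.
From Stdlib Require Import Classical ClassicalEpsilon.
Set Implicit Arguments. Unset Strict Implicit. Unset Printing Implicit Defensive.
Import GRing.Theory.
Local Open Scope ring_scope.

(* Since R is noetherian, a = (g_1, ..., g_k) is finitely generated, and the
   a-torsion module N is the directed union of the layers (0 :_N a^n); so it
   suffices that every layer lies in S.  The layer (0 :_N a^(n+1)) is obtained
   from its submodule killed by g_1, ..., g_k, which lies in (0 :_N a), by k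
   extensions: the multiplication by g_i maps it into (0 :_N a^n), and the
   kernel of that multiplication is the next smaller piece. *)

Section FinitelyGeneratedIdeals.
Variable R : comPzRingType.

Fixpoint span (l : seq R) (r : R) : Prop :=
  if l is g :: l' then exists c y, span l' y /\ r = c * g + y else r = 0.

Lemma span_ideal l : is_ideal (span l).
Proof.
elim: l => [|g l [span0 spanD spanM]] /=.
  by split=> [//|x y -> ->|r x ->]; rewrite ?addr0 ?mulr0.
split.
- by exists 0, 0; rewrite mul0r addr0.
- move=> _ _ [c1 [y1 [s1 ->]]] [c2 [y2 [s2 ->]]].
  exists (c1 + c2), (y1 + y2); split; first exact: spanD.
  by rewrite mulrDl -!addrA; congr (_ + _); rewrite addrCA.
- move=> r _ [c [y [s ->]]]; exists (r * c), (r * y); split; first exact: spanM.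
  by rewrite mulrDr mulrA.
Qed.

Lemma span_cons g l r : span l r -> span (g :: l) r.
Proof. by move=> s; exists 0, r; rewrite mul0r add0r. Qed.

Lemma span_head g l : span (g :: l) g.
Proof. by exists 1, 0; split; [case: (span_ideal l) | rewrite mul1r addr0]. Qed.

Lemma noetherian_ideal_fin_gen (a : R -> Prop) : noetherian R -> is_ideal a ->
  exists2 l : seq R, (forall g, g \in l -> a g) & (forall r, a r -> span l r).
Proof.
move=> noeth [a0 _ _].
pose good l g := a g /\ (~ span l g \/ forall h, a h -> span l h).
have good_ex l : exists g, good l g.
  have [a_span|] := classic (forall h, a h -> span l h).
    by exists 0; split=> //; right.
  move=> /not_all_ex_not[h h_out]; have [ah nh] := imply_to_and _ _ h_out.
  by exists h; split=> //; left.
(* [next l] lies in [a], and outside [span l] unless [a] is contained in it. *)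
pose next l := epsilon (inhabits 0) (good l).
have next_good l : good l (next l) by apply: epsilon_spec.
pose fix chain n := if n is n'.+1 then next (chain n') :: chain n' else [::].
have [n chain_stable] := noeth (fun n => span (chain n))
  (fun n => span_ideal _) (fun n x => @span_cons _ _ x).
exists (chain n).
  elim: n {chain_stable} => [//|n IHn] g /=; rewrite in_cons.
  by case/orP=> [/eqP->|/IHn//]; case: (next_good (chain n)).
have [_ [next_out|//]] := next_good (chain n).
by case: next_out; apply: (chain_stable n.+1) => //; apply: span_head.
Qed.

End FinitelyGeneratedIdeals.

Section Submodules.
Variables (R : comPzRingType) (M : lmodType R).

Lemma annihilator_submod (I : Type) (C : I -> Prop) (f : I -> R) :
  is_submod (fun x : M => forall i, C i -> f i *: x = 0).
Proof.
split=> [i _|x y x0 y0 i Ci|r x x0 i Ci]; first by rewrite scaler0.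
  by rewrite scalerDr x0 ?y0 ?addr0.
by rewrite scalerA mulrC -scalerA x0 ?scaler0.
Qed.

Lemma submodI (N N' : M -> Prop) :
  is_submod N -> is_submod N' -> is_submod (fun x => N x /\ N' x).
Proof.
case=> [N0 ND NZ] [N'0 N'D N'Z].
by split=> [//|x y [? ?] [? ?]|r x [? ?]]; split; auto.
Qed.

Lemma annsub_submod (A : R -> Prop) (N : M -> Prop) :
  is_submod N -> is_submod (annsub A N).
Proof. by move=> N_submod; apply: submodI N_submod (annihilator_submod A id). Qed.

Lemma lker_submod (M' : lmodType R) (f : {linear M -> M'}) :
  is_submod (fun x => f x = 0).
Proof.
split=> [|x y fx fy|r x fx]; first exact: linear0.
  by rewrite linearD fx fy addr0.
by rewrite linearZZ fx scaler0.
Qed.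

Lemma img_submod (M' : lmodType R) (f : {linear M -> M'}) (N : M -> Prop) :
  is_submod N -> is_submod (img f N).
Proof.
case=> [N0 ND NZ]; split.
- by exists 0 => //; apply: linear0.
- move=> _ _ [x Nx <-] [y Ny <-].
  by exists (x + y); [apply: ND | rewrite linearD].
- by move=> r _ [x Nx <-]; exists (r *: x); [apply: NZ | rewrite linearZZ].
Qed.

Lemma span_annihilates l (x : M) r :
  (forall g, g \in l -> g *: x = 0) -> span l r -> r *: x = 0.
Proof.
elim: l r => [|g l IHl] r /= l_x; first by move->; rewrite scale0r.
case=> c [y [span_y ->]]; rewrite scalerDl -scalerA l_x ?mem_head // scaler0.
by rewrite add0r IHl // => h l_h; rewrite l_x // in_cons l_h orbT.
Qed.

Variable a : R -> Prop.

Lemma killed_by_pow0 (x : M) : killed_by_pow a 0 x -> x = 0.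
Proof. by move/(_ (fun _ => 0)); rewrite big_ord0 scale1r; apply; case. Qed.

Lemma killed_by_pow_succ n (x : M) :
  killed_by_pow a n x -> killed_by_pow a n.+1 x.
Proof.
move=> x_n s a_s; rewrite big_ord_recr /= mulrC -scalerA.
by rewrite (x_n (fun i => s (widen_ord (leqnSn n) i))) ?scaler0.
Qed.

Lemma killed_by_pow_mono m n (x : M) :
  (m <= n)%N -> killed_by_pow a m x -> killed_by_pow a n x.
Proof.
move=> /subnK <-; elim: (n - m)%N => [//|k IHk] /IHk.
exact: killed_by_pow_succ.
Qed.

Lemma killed_by_pow_scale n (x : M) g :
  a g -> killed_by_pow a n.+1 x -> killed_by_pow a n (g *: x).
Proof.
move=> a_g x_n s a_s.
pose s' (i : 'I_n.+1) := if insub (val i) is Some j then s j else g.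
have a_s' i : a (s' i) by rewrite /s'; case: insub.
rewrite scalerA -(x_n s' a_s') big_ord_recr /= /s' insubN ?ltnn //.
by congr (_ * _ *: _); apply: eq_bigr => i _; rewrite /= valK.
Qed.

Definition annsub_pow n (N : M -> Prop) : M -> Prop :=
  fun x => N x /\ killed_by_pow a n x.

Lemma annsub_pow_submod n N : is_submod N -> is_submod (annsub_pow n N).
Proof.
move=> N_submod; apply: submodI N_submod _.
exact: (@annihilator_submod _ (fun s => forall i, a (s i)) (fun s => \prod_i s i)).
Qed.

End Submodules.

Section ClosureUnderExtensions.
Variables (R : comPzRingType) (S : modclass R) (M : lmodType R).
Arguments S : clear implicits.
Hypotheses (S_sub : closed_sub S) (S_ext : closed_ext S).

Lemma closed_ext_scale (T U : M -> Prop) (g : R) :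
  is_submod T -> is_submod U -> (forall x, T x -> U (g *: x)) -> S M U ->
  S M (fun x => T x /\ g *: x = 0) -> S M T.
Proof.
move=> T_submod U_submod gTU S_U S_ker.
apply: (@S_ext M M ( *:%R g) T T_submod S_ker).
apply: (S_sub U_submod (img_submod _ T_submod) _ S_U).
by move=> _ [x Tx <-]; apply: gTU.
Qed.

Lemma closed_ext_annihilated (T U : M -> Prop) (l : seq R) :
  is_submod T -> is_submod U -> (forall g x, g \in l -> T x -> U (g *: x)) ->
  S M U -> S M (annsub (fun g => g \in l) T) -> S M T.
Proof.
move=> T_submod U_submod lTU S_U; elim: l lTU => [|g l IHl] lTU S_Tl.
  by apply: (S_sub (annsub_submod _ T_submod) T_submod _ S_Tl).
have T_l_submod := annsub_submod (fun h => h \in l) T_submod.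
apply: IHl => [h x l_h|]; first by apply: lTU; rewrite in_cons l_h orbT.
apply: (closed_ext_scale (g := g) T_l_submod U_submod) => [x [Tx _]|//|].
  by apply: lTU; rewrite ?mem_head.
apply: (S_sub (annsub_submod _ T_submod)
          (submodI T_l_submod (lker_submod ( *:%R g))) _ S_Tl).
by move=> x [[Tx l_x] g_x]; split=> // h; rewrite in_cons => /orP[/eqP->|/l_x].
Qed.

Variables (a : R -> Prop) (l : seq R).
Hypotheses (l_a : forall g, g \in l -> a g) (a_l : forall r, a r -> span l r).
Variable N : M -> Prop.
Hypotheses (N_submod : is_submod N) (S_annsub : S M (annsub a N)).

Lemma annsub_pow_in n : S M (annsub_pow a n N).
Proof.
have annsub_pow_N_submod k := annsub_pow_submod a k N_submod.
elim: n => [|n IHn].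
  apply: (S_sub (annsub_submod a N_submod) (annsub_pow_N_submod 0%N) _ S_annsub).
  by move=> x [Nx /killed_by_pow0 x0]; split=> // r _; rewrite x0 scaler0.
apply: (closed_ext_annihilated (annsub_pow_N_submod n.+1) (annsub_pow_N_submod n)
          (l := l)) => // [g x l_g [Nx x_n]|].
  have [_ _ NZ] := N_submod.
  by split; [apply: NZ | apply: killed_by_pow_scale x_n; apply: l_a].
apply: (S_sub (annsub_submod a N_submod)
          (annsub_submod _ (annsub_pow_N_submod n.+1)) _ S_annsub).
by move=> x [[Nx _] l_x]; split=> // r /a_l; apply: span_annihilates.
Qed.

End ClosureUnderExtensions.

Theorem proposition3p1 (R : comPzRingType) (S : modclass R) :
  noetherian R -> closed_sub S -> closed_ext S -> closed_dunion S ->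
  closed_iso S ->
  forall a : R -> Prop, is_ideal a -> condC S a.
Proof.
(* Modules are given as submodules of a fixed ambient module throughout. *)
move=> noeth S_sub S_ext S_dunion _ a a_ideal M N N_submod N_torsion S_annsub.
have [l l_a a_l] := noetherian_ideal_fin_gen noeth a_ideal.
apply: (S_dunion M N nat (fun n => annsub_pow a n N)) => //.
- exact: inhabits 0%N.
- by move=> n; apply: annsub_pow_submod.
- move=> i j; exists (maxn i j).
  split=> x [Nx x_a]; split=> //.
    exact: killed_by_pow_mono (leq_maxl i j) x_a.
  exact: killed_by_pow_mono (leq_maxr i j) x_a.
- by move=> n; apply: (annsub_pow_in S_sub S_ext l_a a_l).
- move=> x; split=> [Nx|[n []//]].
  by have [n x_n] := N_torsion x Nx; exists n.
Qed.
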